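(* Let $X$ be a locally compact Hausdorff space and $\zeta$ a quasi-integral on $X$. Then the set function $\tau_\zeta:\mathcal A(X)\to[0,\infty)$ defined by $$\tau_\zeta(K)=\inf\{\zeta(f)\mid f\in C_c(X),\ f\ge \mathbf 1_K\},\qquad \tau_\zeta(O)=\sup\{\zeta(f)\mid f\in C_c(X),\ f\le \mathbf 1_O\}$$ ($K\in\mathcal K(X)$, $O\in\mathcal O(X)$) is a topological measure on $X$.
   Context: $C_c(X)$: continuous real functions with compact support, uniform norm; $\mathbf 1_A$: indicator function. A quasi-integral on $X$ is a functional $\eta:C_c(X)\to\mathbb R$ such that: (i) $\eta(f)\le\eta(g)$ whenever $f\le g$; (ii) for every compact $K\subset X$ there is $N_K\ge0$ with $|\eta(f)-\eta(g)|\le N_K\|f-g\|$ for all $f,g$ supported in $K$; (iii) for every $f\in C_c(X)$, $\eta$ is linear on $\{\phi\circ f\mid \phi\in C(\mathbb R),\ \phi(0)=0\}$. $\mathcal K(X)$: compact subsets; $\mathcal O(X)$: open subsets with compact closure; $\mathcal A(X)=\mathcal K(X)\cup\mathcal O(X)$. A topological measure is $\tau:\mathcal A(X)\to[0,\infty)$ with: (additivity) $\tau(A\cup A')=\tau(A)+\tau(A')$ for disjoint $A,A'\in\mathcal A(X)$ with $A\cup A'\in\mathcal A(X)$; (monotonicity) $\tau(A)\le\tau(A')$ for $A\subset A'$; (regularity) $\tau(K)=\inf\{\tau(O)\mid O\in\mathcal O(X),O\supset K\}$ and $\tau(O)=\sup\{\tau(K)\mid K\in\mathcal K(X),K\subset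 O\}$. *)

From Stdlib Require Import Reals Lra Classical ClassicalEpsilon.
Open Scope R_scope.

Record TopSpace : Type := {
  carrier :> Type;
  is_open : (carrier -> Prop) -> Prop;
  open_full : is_open (fun _ => True);
  open_inter : forall U V, is_open U -> is_open V -> is_open (fun x => U x /\ V x);
  open_union : forall F : (carrier -> Prop) -> Prop,
      (forall U, F U -> is_open U) -> is_open (fun x => exists U, F U /\ U x)
}.

Section Topology.
Variable X : TopSpace.

Definition subset (A B : X -> Prop) : Prop := forall x, A x -> B x.

Definition is_closed (C : X -> Prop) : Prop := is_open X (fun x => ~ C x).

Definition closure (A : X -> Prop) : X -> Prop :=
  fun x => forall C, is_closed C -> subset A C -> C x.

Definition compact (K : X -> Prop) : Prop :=
  forall F : (X -> Prop) -> Prop,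
    (forall U, F U -> is_open X U) ->
    subset K (fun x => exists U, F U /\ U x) ->
    exists l : list (X -> Prop),
      (forall U, List.In U l -> F U) /\
      subset K (fun x => exists U, List.In U l /\ U x).

Definition hausdorff : Prop :=
  forall x y : X, x <> y ->
    exists U V, is_open X U /\ is_open X V /\ U x /\ V y /\
      (forall z, ~ (U z /\ V z)).

Definition locally_compact : Prop :=
  forall x : X, exists U, is_open X U /\ U x /\ compact (closure U).

Definition R_open (V : R -> Prop) : Prop :=
  forall y, V y -> exists e, 0 < e /\ forall z, Rabs (z - y) < e -> V z.

Definition continuous (f : X -> R) : Prop :=
  forall V, R_open V -> is_open X (fun x => V (f x)).

Definition support (f : X -> R) : X -> Prop := closure (fun x => f x <> 0).

Definition Cc (f : X -> R) : Prop := continuous f /\ compact (support f).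

Definition supported_in (f : X -> R) (K : X -> Prop) : Prop := subset (support f) K.

(** [unif_bound h c] : ||h|| <= c for the uniform norm ||h|| = sup |h| ;
    the uniform norm is the least c >= 0 with this property. *)
Definition unif_bound (h : X -> R) (c : R) : Prop :=
  0 <= c /\ forall x, Rabs (h x) <= c.

Definition quasi_integral (eta : (X -> R) -> R) : Prop :=
  (forall f g, Cc f -> Cc g -> (forall x, f x <= g x) -> eta f <= eta g) /\
  (forall K, compact K -> exists NK, 0 <= NK /\
     forall f g, Cc f -> Cc g -> supported_in f K -> supported_in g K ->
       forall c, unif_bound (fun x => f x - g x) c ->
         Rabs (eta f - eta g) <= NK * c) /\
  (* (iii) linearity on the singly generated subalgebra {phi o f | phi in C(R), phi 0 = 0} *)
  (forall f, Cc f ->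
     forall (phi psi : R -> R) (a b : R),
       continuity phi -> phi 0 = 0 -> continuity psi -> psi 0 = 0 ->
       eta (fun x => a * phi (f x) + b * psi (f x))
         = a * eta (fun x => phi (f x)) + b * eta (fun x => psi (f x))).

Definition in_K (A : X -> Prop) : Prop := compact A.
Definition in_O (A : X -> Prop) : Prop := is_open X A /\ compact (closure A).
Definition in_A (A : X -> Prop) : Prop := in_K A \/ in_O A.

Definition is_glb (S : R -> Prop) (m : R) : Prop :=
  (forall y, S y -> m <= y) /\ (forall b, (forall y, S y -> b <= y) -> b <= m).

Definition topological_measure (tau : (X -> Prop) -> R) : Prop :=
  (forall A, in_A A -> 0 <= tau A) /\
  (forall A A', in_A A -> in_A A' -> (forall x, ~ (A x /\ A' x)) ->
     in_A (fun x => A x \/ A' x) ->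
     tau (fun x => A x \/ A' x) = tau A + tau A') /\
  (forall A A', in_A A -> in_A A' -> subset A A' -> tau A <= tau A') /\
  (forall K, in_K K ->
     is_glb (fun r => exists O, in_O O /\ subset K O /\ r = tau O) (tau K)) /\
  (forall O, in_O O ->
     is_lub (fun r => exists K, in_K K /\ subset K O /\ r = tau K) (tau O)).

Definition indicator (A : X -> Prop) (x : X) : R :=
  if excluded_middle_informative (A x) then 1 else 0.

End Topology.

(** supremum / infimum of a set of reals (chosen by classical choice;
    meaningful when the set is nonempty and bounded) *)
Definition Rsup (S : R -> Prop) : R := epsilon (inhabits 0) (fun s => is_lub S s).
Definition Rinf (S : R -> Prop) : R := - Rsup (fun y => S (- y)).

Definition tau_of (X : TopSpace) (zeta : (X -> R) -> R) (A : X -> Prop) : R :=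
  if excluded_middle_informative (compact X A) then
    Rinf (fun r => exists f, Cc X f /\ (forall x, indicator X A x <= f x) /\ r = zeta f)
  else
    Rsup (fun r => exists f, Cc X f /\ (forall x, f x <= indicator X A x) /\ r = zeta f).

(* Urysohn's lemma (built from a dyadic family of open sets) makes the two formulas for tau agree
   on compact open sets and gives monotonicity.  Outer regularity comes from the superlevel sets
   [f > t] of functions [f >= 1_K], whose tau is at most [zeta f / t]; inner regularity from the
   local Lipschitz property, which compares [zeta f^+] with [zeta (f - t)^+ <= tau (f >= t)].
   A quasi-integral is additive on functions of a single generator; in particular it adds
   nonnegative functions with disjoint supports (both are functions of their difference), which
   yields additivity on disjoint compact sets and on disjoint open sets, and the same device with
   a plateau function gives [tau C <= tau K + tau (W \ K)] for [K ⊂ C ⊂ W].  Additivity for a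
   compact and an open set then follows from outer regularity. *)

From Stdlib Require Import Reals Lra Lia ZArith Classical ClassicalEpsilon.
From Stdlib Require Import FunctionalExtensionality PropExtensionality List.
Open Scope R_scope.

Lemma classical_filter {A : Type} (P : A -> Prop) (l : list A) :
  exists l', forall a, In a l' <-> In a l /\ P a.
Proof.
  induction l as [|b l [l' Hl']].
  - exists nil; simpl; tauto.
  - destruct (classic (P b)) as [Pb|Pb].
    + exists (b :: l'); intros a; simpl; rewrite Hl'.
      split; [intros [<-|?]|intros [[<-|?] ?]]; tauto.
    + exists l'; intros a; simpl; rewrite Hl'.
      split; [tauto|intros [[<-|?] ?]]; tauto.
Qed.

Section Topology.
Variable X : TopSpace.

Lemma pred_ext (A B : X -> Prop) : (forall x, A x <-> B x) -> A = B.
Proof.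
  intros H; apply functional_extensionality; intros x; apply propositional_extensionality; auto.
Qed.

Lemma open_ext (A B : X -> Prop) : (forall x, A x <-> B x) -> is_open X A -> is_open X B.
Proof. intros H; rewrite (pred_ext A B H); auto. Qed.

Lemma closed_ext (A B : X -> Prop) : (forall x, A x <-> B x) -> is_closed X A -> is_closed X B.
Proof. intros H; rewrite (pred_ext A B H); auto. Qed.

Lemma compact_ext (A B : X -> Prop) : (forall x, A x <-> B x) -> compact X A -> compact X B.
Proof. intros H; rewrite (pred_ext A B H); auto. Qed.

Lemma open_family_union (P : (X -> Prop) -> Prop) (A : X -> Prop) :
  (forall U, P U -> is_open X U) -> (forall x, A x <-> exists U, P U /\ U x) -> is_open X A.
Proof.
  intros HP HA. apply (open_ext (fun x => exists U, P U /\ U x)).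
  - intros x; rewrite HA; reflexivity.
  - apply open_union; auto.
Qed.

Lemma open_empty : is_open X (fun _ => False).
Proof.
  apply (open_family_union (fun _ => False)); [intros U []|].
  intros x; split; [intros []|intros [U [[] _]]].
Qed.

Lemma open_or (A B : X -> Prop) : is_open X A -> is_open X B -> is_open X (fun x => A x \/ B x).
Proof.
  intros HA HB. apply (open_family_union (fun U => U = A \/ U = B)).
  - intros U [->| ->]; auto.
  - intros x; split.
    + intros [Ax|Bx]; [exists A|exists B]; auto.
    + intros [U [[->| ->] Ux]]; auto.
Qed.

Lemma open_of_nbhds (A : X -> Prop) :
  (forall x, A x -> exists U, is_open X U /\ U x /\ subset X U A) -> is_open X A.
Proof.
  intros H. apply (open_family_union (fun U => is_open X U /\ subset X U A)).
  - intros U [? _]; auto.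
  - intros x; split.
    + intros Ax; destruct (H x Ax) as [U [? [? ?]]]; exists U; auto.
    + intros [U [[_ HUA] Ux]]; auto.
Qed.

Lemma closed_empty : is_closed X (fun _ => False).
Proof. apply (open_ext (fun _ => True)); [tauto|apply open_full]. Qed.

Lemma closed_complement (U : X -> Prop) : is_open X U -> is_closed X (fun x => ~ U x).
Proof. apply open_ext; intros x; tauto. Qed.

Lemma closed_or (A B : X -> Prop) : is_closed X A -> is_closed X B -> is_closed X (fun x => A x \/ B x).
Proof.
  intros HA HB. apply (open_ext (fun x => ~ A x /\ ~ B x)); [intros x; tauto|].
  apply open_inter; auto.
Qed.

Lemma subset_closure (A : X -> Prop) : subset X A (closure X A).
Proof. intros x Ax C _ HAC; auto. Qed.

Lemma closure_minimal (A C : X -> Prop) :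
  is_closed X C -> subset X A C -> subset X (closure X A) C.
Proof. intros HC HAC x Hx; apply Hx; auto. Qed.

Lemma closure_closed (A : X -> Prop) : is_closed X (closure X A).
Proof.
  apply (open_family_union (fun U => exists C, is_closed X C /\ subset X A C /\ U = fun x => ~ C x)).
  - intros U [C [HC [_ ->]]]; auto.
  - intros x; split.
    + intros Hx. apply not_all_ex_not in Hx as [C HC].
      apply imply_to_and in HC as [HC1 HC2]. apply imply_to_and in HC2 as [HC2 HC3].
      exists (fun x => ~ C x); split; auto. exists C; auto.
    + intros [U [[C [HC [HAC ->]]] HCx]] Hx. apply HCx, Hx; auto.
Qed.

Lemma closure_mono (A B : X -> Prop) : subset X A B -> subset X (closure X A) (closure X B).
Proof.
  intros HAB. apply closure_minimal; [apply closure_closed|].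
  intros x Ax; apply subset_closure; auto.
Qed.

Lemma compact_empty : compact X (fun _ => False).
Proof. intros F _ _; exists nil; split; [intros U []|intros x []]. Qed.

Lemma compact_union (K1 K2 : X -> Prop) :
  compact X K1 -> compact X K2 -> compact X (fun x => K1 x \/ K2 x).
Proof.
  intros H1 H2 F HF Hcov.
  destruct (H1 F HF) as [l1 [A1 B1]]; [intros x Hx; apply Hcov; auto|].
  destruct (H2 F HF) as [l2 [A2 B2]]; [intros x Hx; apply Hcov; auto|].
  exists (l1 ++ l2); split.
  - intros U HU; apply in_app_or in HU as [?|?]; auto.
  - intros x [Hx|Hx]; [destruct (B1 x Hx) as [U [? ?]]|destruct (B2 x Hx) as [U [? ?]]];
      exists U; split; auto; apply in_or_app; auto.
Qed.

Lemma compact_inter_closed (K C : X -> Prop) :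
  compact X K -> is_closed X C -> compact X (fun x => K x /\ C x).
Proof.
  intros HK HC F HF Hcov.
  destruct (HK (fun U => F U \/ U = fun x => ~ C x)) as [l [Hl Hcovl]].
  - intros U [?| ->]; auto.
  - intros x Kx. destruct (classic (C x)) as [Cx|Cx].
    + destruct (Hcov x (conj Kx Cx)) as [U [? ?]]; exists U; auto.
    + exists (fun x => ~ C x); auto.
  - destruct (classical_filter F l) as [l' Hl'].
    exists l'; split; [intros U HU; apply Hl', HU|].
    intros x [Kx Cx]. destruct (Hcovl x Kx) as [U [HU Ux]].
    exists U; split; auto. apply Hl'; split; auto.
    destruct (Hl U HU) as [?| ->]; [auto|contradiction].
Qed.

Lemma compact_closed_subset (K A : X -> Prop) :
  compact X K -> is_closed X A -> subset X A K -> compact X A.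
Proof.
  intros HK HA HAK. apply (compact_ext (fun x => K x /\ A x)); [|apply compact_inter_closed; auto].
  intros x; split; [tauto|intros Ax; split; auto].
Qed.

Lemma finite_common_nbhd (P : (X -> Prop) -> (X -> Prop) -> Prop) (K : X -> Prop)
    (l : list (X -> Prop)) :
  (forall W, In W l -> exists U, is_open X U /\ subset X K U /\ P U W) ->
  exists V, is_open X V /\ subset X K V /\ forall W, In W l -> exists U, subset X V U /\ P U W.
Proof.
  induction l as [|W l IH]; intros H.
  - exists (fun _ => True); split; [apply open_full|split; [intros x _; auto|intros W []]].
  - destruct IH as [V [HV [HKV HVl]]]; [intros; apply H; simpl; auto|].
    destruct (H W) as [U [HU [HKU HP]]]; [simpl; auto|].
    exists (fun x => V x /\ U x); split; [apply open_inter; auto|split].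
    + intros x Kx; split; auto.
    + intros W' [<-|HW'].
      * exists U; split; auto. intros x [_ ?]; auto.
      * destruct (HVl W' HW') as [U' [? ?]]; exists U'; split; auto. intros x [? _]; auto.
Qed.

Hypothesis HX : hausdorff X.

Lemma compact_point_separation (K : X -> Prop) (p : X) : compact X K -> ~ K p ->
  exists U W, is_open X U /\ is_open X W /\ subset X K U /\ W p /\ (forall z, ~ (U z /\ W z)).
Proof.
  intros HK Kp.
  destruct (HK (fun U => is_open X U /\
                  exists W, is_open X W /\ W p /\ forall z, ~ (U z /\ W z))) as [l [Hl Hcov]].
  - intros U [? _]; auto.
  - intros x Kx. assert (x <> p) by (intros ->; auto).
    destruct (HX x p H) as [U [W [? [? [? [? ?]]]]]].
    exists U; split; auto. split; auto. exists W; auto.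
  - destruct (finite_common_nbhd (fun W U => W p /\ forall z, ~ (U z /\ W z)) (fun x => x = p) l)
      as [W [HW [HpW HWl]]].
    { intros U HU. destruct (Hl U HU) as [_ [W [? [? ?]]]]. exists W; split; auto.
      split; [intros x ->|split]; auto. }
    exists (fun x => exists U, In U l /\ U x), W; split; [|split; [|split; [|split]]]; auto.
    + apply open_union; intros U HU; apply Hl; auto.
    + intros z [[U [HU Uz]] Wz]. destruct (HWl U HU) as [W' [HWW' [_ Hd]]]. apply (Hd z); auto.
Qed.

Lemma compact_closed (K : X -> Prop) : compact X K -> is_closed X K.
Proof.
  intros HK. apply open_of_nbhds. intros p Kp.
  destruct (compact_point_separation K p HK Kp) as [U [W [? [? [? [? Hd]]]]]].
  exists W; split; [|split]; auto. intros z Wz Kz. apply (Hd z); auto.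
Qed.

End Topology.

Section Continuity.
Variable X : TopSpace.

Lemma R_open_lt (b : R) : R_open (fun y => y < b).
Proof. intros y Hy. exists (b - y); split; [lra|]. intros z Hz. apply Rabs_def2 in Hz. lra. Qed.

Lemma R_open_gt (a : R) : R_open (fun y => a < y).
Proof. intros y Hy. exists (y - a); split; [lra|]. intros z Hz. apply Rabs_def2 in Hz. lra. Qed.

Lemma continuous_open_lt (f : X -> R) (b : R) : continuous X f -> is_open X (fun x => f x < b).
Proof. intros Hf; apply (Hf (fun y => y < b)), R_open_lt. Qed.

Lemma continuous_open_gt (f : X -> R) (a : R) : continuous X f -> is_open X (fun x => a < f x).
Proof. intros Hf; apply (Hf (fun y => a < y)), R_open_gt. Qed.

Lemma continuous_of_open_halflines (f : X -> R) :
  (forall a, is_open X (fun x => a < f x)) -> (forall b, is_open X (fun x => f x < b)) ->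
  continuous X f.
Proof.
  intros Ha Hb V HV. apply open_of_nbhds. intros x Vfx.
  destruct (HV (f x) Vfx) as [e [He HVe]].
  exists (fun y => f x - e < f y /\ f y < f x + e); split; [apply open_inter; auto|split].
  - lra.
  - intros y [? ?]. apply HVe, Rabs_def1; lra.
Qed.

Lemma continuity_pt_eps (phi : R -> R) (y : R) : continuity_pt phi y ->
  forall e, 0 < e -> exists d, 0 < d /\ forall z, Rabs (z - y) < d -> Rabs (phi z - phi y) < e.
Proof.
  intros H e He. destruct (H e He) as [d [Hd Hz]]. exists d; split; auto.
  intros z Hzy. destruct (Req_dec z y) as [->|Hne].
  - rewrite Rminus_diag, Rabs_R0; auto.
  - apply (Hz z). repeat split; auto.
Qed.

Lemma continuous_comp (phi : R -> R) (f : X -> R) :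
  continuity phi -> continuous X f -> continuous X (fun x => phi (f x)).
Proof.
  intros Hphi Hf V HV. apply (Hf (fun y => V (phi y))).
  intros y Vy. destruct (HV (phi y) Vy) as [e [He HVe]].
  destruct (continuity_pt_eps phi y (Hphi y) e He) as [d [Hd Hdd]].
  exists d; split; auto.
Qed.

Lemma continuous_plus (f g : X -> R) :
  continuous X f -> continuous X g -> continuous X (fun x => f x + g x).
Proof.
  intros Hf Hg. apply continuous_of_open_halflines.
  - intros a. apply (open_family_union X (fun U => exists q, U = fun x => q < f x /\ a - q < g x)).
    + intros U [q ->]. apply open_inter; apply continuous_open_gt; auto.
    + intros x; split.
      * intros Hx. exists (fun y => (f x - g x + a) / 2 < f y /\ a - (f x - g x + a) / 2 < g y).
        split; [eexists; reflexivity|lra].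
      * intros [U [[q ->] [? ?]]]. lra.
  - intros b. apply (open_family_union X (fun U => exists q, U = fun x => f x < q /\ g x < b - q)).
    + intros U [q ->]. apply open_inter; apply continuous_open_lt; auto.
    + intros x; split.
      * intros Hx. exists (fun y => f y < (f x - g x + b) / 2 /\ g y < b - (f x - g x + b) / 2).
        split; [eexists; reflexivity|lra].
      * intros [U [[q ->] [? ?]]]. lra.
Qed.

Lemma continuous_min (f g : X -> R) :
  continuous X f -> continuous X g -> continuous X (fun x => Rmin (f x) (g x)).
Proof.
  intros Hf Hg. apply continuous_of_open_halflines.
  - intros a. apply (open_ext X (fun x => a < f x /\ a < g x)).
    + intros x. unfold Rmin. destruct (Rle_dec (f x) (g x)); lra.
    + apply open_inter; apply continuous_open_gt; auto.
  - intros b. apply (open_ext X (fun x => f x < b \/ g x < b)).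
    + intros x. unfold Rmin. destruct (Rle_dec (f x) (g x)); lra.
    + apply open_or; apply continuous_open_lt; auto.
Qed.

Lemma support_subset (f g : X -> R) :
  (forall x, f x = 0 -> g x = 0) -> subset X (support X g) (support X f).
Proof. intros H. apply closure_mono. intros x Hgx Hfx. apply Hgx, H, Hfx. Qed.

Lemma Cc_of_zeros (f g h : X -> R) : Cc X f -> Cc X g -> continuous X h ->
  (forall x, f x = 0 -> g x = 0 -> h x = 0) -> Cc X h.
Proof.
  intros [_ Hf] [_ Hg] Hh H. split; auto.
  apply (compact_closed_subset X (fun x => support X f x \/ support X g x));
    [apply compact_union; auto|apply closure_closed|].
  apply closure_minimal; [apply closed_or; apply closure_closed|].
  intros x Hhx. destruct (classic (f x = 0)); [destruct (classic (g x = 0))|].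
  - exfalso; apply Hhx, H; auto.
  - right; apply subset_closure; auto.
  - left; apply subset_closure; auto.
Qed.

Lemma Cc_zero : Cc X (fun _ => 0).
Proof.
  split.
  - intros V HV. destruct (classic (V 0)).
    + apply (open_ext X (fun _ => True)); [tauto|apply open_full].
    + apply (open_ext X (fun _ => False)); [tauto|apply open_empty].
  - apply (compact_ext X (fun _ => False)); [|apply compact_empty].
    intros x; split; [tauto|]. intros Hx. apply (Hx (fun _ => False)); [apply closed_empty|].
    intros y Hy; apply Hy; auto.
Qed.

Lemma Cc_comp (phi : R -> R) (f : X -> R) :
  continuity phi -> phi 0 = 0 -> Cc X f -> Cc X (fun x => phi (f x)).
Proof.
  intros Hphi Hphi0 Hf. apply (Cc_of_zeros f f); auto.
  - apply continuous_comp; auto; apply Hf.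
  - intros x -> _; auto.
Qed.

Lemma Cc_plus (f g : X -> R) : Cc X f -> Cc X g -> Cc X (fun x => f x + g x).
Proof.
  intros Hf Hg. apply (Cc_of_zeros f g); auto.
  - apply continuous_plus; [apply Hf|apply Hg].
  - intros x -> ->; lra.
Qed.

Lemma Cc_min (f g : X -> R) : Cc X f -> Cc X g -> Cc X (fun x => Rmin (f x) (g x)).
Proof.
  intros Hf Hg. apply (Cc_of_zeros f g); auto.
  - apply continuous_min; [apply Hf|apply Hg].
  - intros x -> ->. apply Rmin_left; lra.
Qed.

End Continuity.

Section LocallyCompact.
Variable X : TopSpace.
Hypothesis HX : hausdorff X.
Hypothesis HLC : locally_compact X.

Lemma compact_closure_union_list (l : list (X -> Prop)) :
  (forall U, In U l -> compact X (closure X U)) ->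
  compact X (fun x => exists U, In U l /\ closure X U x) /\
  is_closed X (fun x => exists U, In U l /\ closure X U x).
Proof.
  induction l as [|V l IH]; intros H.
  - split.
    + apply (compact_ext X (fun _ => False)); [|apply compact_empty].
      intros x; split; [tauto|intros [U [[] _]]].
    + apply (closed_ext X (fun _ => False)); [|apply closed_empty].
      intros x; split; [tauto|intros [U [[] _]]].
  - destruct IH as [IH1 IH2]; [intros; apply H; simpl; auto|].
    assert (E : forall x, (closure X V x \/ exists U, In U l /\ closure X U x) <->
                          exists U, In U (V :: l) /\ closure X U x).
    { intros x; split.
      - intros [Hx|[U [HU Hx]]]; [exists V|exists U]; simpl; auto.
      - intros [U [[<-|HU] Hx]]; [left|right; exists U]; auto. }
    split.
    + apply (compact_ext X _ _ E), compact_union; auto. apply H; simpl; auto.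
    + apply (closed_ext X _ _ E), closed_or; auto. apply closure_closed.
Qed.

Lemma compact_nbhd_compact_closure (K : X -> Prop) : compact X K ->
  exists G, is_open X G /\ subset X K G /\ compact X (closure X G).
Proof.
  intros HK.
  destruct (HK (fun U => is_open X U /\ compact X (closure X U))) as [l [Hl Hcov]].
  - intros U [? _]; auto.
  - intros x _. destruct (HLC x) as [U [? [? ?]]]. exists U; auto.
  - exists (fun x => exists U, In U l /\ U x); split; [|split]; auto.
    + apply open_union; intros; apply Hl; auto.
    + destruct (compact_closure_union_list l) as [H1 H2]; [intros; apply Hl; auto|].
      apply (compact_closed_subset X _ _ H1); [apply closure_closed|].
      apply closure_minimal; auto. intros x [U [HU Ux]]. exists U; split; auto.
      apply subset_closure; auto.
Qed.

Lemma shrink_open_nbhd (K U : X -> Prop) : compact X K -> is_open X U -> subset X K U ->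
  exists V, is_open X V /\ subset X K V /\ compact X (closure X V) /\ subset X (closure X V) U.
Proof.
  intros HK HU HKU.
  destruct (compact_nbhd_compact_closure K HK) as [G [HG [HKG HGc]]].
  assert (HC : compact X (fun x => closure X G x /\ ~ U x))
    by (apply compact_inter_closed; auto; apply closed_complement; auto).
  destruct (HC (fun W => is_open X W /\
                  exists U', is_open X U' /\ subset X K U' /\ forall z, ~ (U' z /\ W z)))
    as [l [Hl Hcov]].
  - intros W [? _]; auto.
  - intros p [_ Up]. assert (Kp : ~ K p) by (intros Kp; apply Up, HKU; auto).
    destruct (compact_point_separation X HX K p HK Kp) as [U' [W [? [? [? [? ?]]]]]].
    exists W; split; auto. split; auto. exists U'; auto.
  - destruct (finite_common_nbhd X (fun U' W => forall z, ~ (U' z /\ W z)) K l)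
      as [V' [HV' [HKV' HV'l]]].
    { intros W HW. destruct (Hl W HW) as [_ [U' [? [? ?]]]]. exists U'; auto. }
    assert (HclG : subset X (closure X (fun x => G x /\ V' x)) (closure X G))
      by (apply closure_mono; intros x [? ?]; auto).
    exists (fun x => G x /\ V' x); split; [apply open_inter; auto|split; [|split]].
    + intros x Kx; split; auto.
    + apply (compact_closed_subset X _ _ HGc); auto. apply closure_closed.
    + intros z Hz. apply NNPP; intros Uz.
      destruct (Hcov z (conj (HclG z Hz) Uz)) as [W [HW Wz]].
      destruct (HV'l W HW) as [U' [HV'U' Hd]].
      assert (Hs : subset X (closure X (fun x => G x /\ V' x)) (fun x => ~ W x)).
      { apply closure_minimal; [apply closed_complement, Hl; auto|].
        intros x [_ V'x] Wx. apply (Hd x); split; auto. }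
      apply (Hs z Hz Wz).
Qed.

End LocallyCompact.

Lemma Rsup_is_lub (S : R -> Prop) :
  (exists y, S y) -> (exists M, forall y, S y -> y <= M) -> is_lub S (Rsup S).
Proof.
  intros Hne [M HM]. unfold Rsup. apply epsilon_spec.
  destruct (completeness S) as [m Hm]; [exists M; exact HM|exact Hne|]. exists m; exact Hm.
Qed.

Lemma Rinf_is_glb (S : R -> Prop) :
  (exists y, S y) -> (exists m, forall y, S y -> m <= y) -> is_glb S (Rinf S).
Proof.
  intros [y0 Hy0] [m Hm].
  destruct (Rsup_is_lub (fun y => S (- y))) as [Hub Hleast].
  - exists (- y0). rewrite Ropp_involutive; auto.
  - exists (- m). intros y Hy. apply Hm in Hy. lra.
  - unfold Rinf. split.
    + intros y Hy. assert (- y <= Rsup (fun y => S (- y))); [|lra].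
      apply Hub. rewrite Ropp_involutive; auto.
    + intros b Hb. assert (Rsup (fun y => S (- y)) <= - b); [|lra].
      apply Hleast. intros y Hy. apply Hb in Hy. lra.
Qed.

Lemma Rdiv_lt_iff (a b c : R) : 0 < c -> a / c < b <-> a < b * c.
Proof.
  intros Hc. replace a with (a / c * c) at 2 by (field; lra).
  split; intros H; [apply Rmult_lt_compat_r|apply (Rmult_lt_reg_r c)]; auto.
Qed.

Lemma Rlt_div_iff (a b c : R) : 0 < c -> a < b / c <-> a * c < b.
Proof.
  intros Hc. replace b with (b / c * c) at 2 by (field; lra).
  split; intros H; [apply Rmult_lt_compat_r|apply (Rmult_lt_reg_r c)]; auto.
Qed.

Lemma pow2_pos (n : nat) : 0 < 2 ^ n.
Proof. apply pow_lt; lra. Qed.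

Lemma INR_pow2 (n : nat) : INR (2 ^ n) = 2 ^ n.
Proof. rewrite pow_INR; reflexivity. Qed.

Lemma INR_le_pow2 (n : nat) : INR n <= 2 ^ n.
Proof.
  induction n as [|n IH]; [simpl; lra|].
  rewrite S_INR; simpl pow. assert (1 <= 2 ^ n) by (apply pow_R1_Rle; lra). lra.
Qed.

Lemma dyadic_between (a b : R) : 0 <= a -> a < b -> b <= 1 ->
  exists n j, (S j <= 2 ^ n)%nat /\ a < INR j / 2 ^ n /\ INR (S j) / 2 ^ n < b.
Proof.
  intros Ha Hab Hb.
  destruct (archimed_cor1 ((b - a) / 2)) as [N [HN HN0]]; [lra|].
  assert (HN2 : 2 < (b - a) * 2 ^ N).
  { pose proof (INR_le_pow2 N). apply lt_0_INR in HN0.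
    assert (/ 2 ^ N <= / INR N) by (apply Rinv_le_contravar; lra).
    apply (Rmult_lt_reg_r (/ 2 ^ N)); [apply Rinv_0_lt_compat, pow2_pos|].
    rewrite Rmult_assoc, Rinv_r by (pose proof (pow2_pos N); lra). lra. }
  pose proof (pow2_pos N) as HpN.
  destruct (archimed (a * 2 ^ N)) as [Hup1 Hup2].
  assert (Hup0 : (0 <= up (a * 2 ^ N))%Z).
  { apply le_IZR. assert (0 <= a * 2 ^ N) by (apply Rmult_le_pos; lra). lra. }
  exists N, (Z.to_nat (up (a * 2 ^ N))).
  assert (Ej : INR (Z.to_nat (up (a * 2 ^ N))) = IZR (up (a * 2 ^ N)))
    by (rewrite INR_IZR_INZ, Z2Nat.id; auto).
  rewrite S_INR, Rlt_div_iff, Rdiv_lt_iff, Ej by auto.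
  split; [|split; nra].
  apply INR_lt. rewrite Ej, INR_pow2. nra.
Qed.

Section Urysohn.
Variable X : TopSpace.
Hypothesis HX : hausdorff X.
Hypothesis HLC : locally_compact X.

Definition open_between (A B : X -> Prop) : X -> Prop :=
  epsilon (inhabits A)
    (fun C => is_open X C /\ subset X (closure X A) C /\ subset X (closure X C) B).

Lemma open_between_spec (A B : X -> Prop) :
  is_open X B -> compact X (closure X A) -> subset X (closure X A) B ->
  is_open X (open_between A B) /\ subset X (closure X A) (open_between A B) /\
  subset X (closure X (open_between A B)) B.
Proof.
  intros HB HA HAB. unfold open_between. apply epsilon_spec.
  destruct (shrink_open_nbhd X HX HLC (closure X A) B HA HB HAB) as [V [? [? [? ?]]]].
  exists V; auto.
Qed.

Variables V0 V1 : X -> Prop.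
Hypothesis HV0 : is_open X V0.
Hypothesis HV1 : is_open X V1.
Hypothesis HV01 : subset X (closure X V0) V1.
Hypothesis HV1c : compact X (closure X V1).

(* [dyadic_open n j] plays the role of the open set indexed by [j / 2^n] in [0, 1]: level [n + 1]
   keeps the even indices of level [n] and inserts [open_between] at the odd ones. *)
Fixpoint dyadic_open (n j : nat) : X -> Prop :=
  match n with
  | O => if Nat.eqb j 0 then V0 else V1
  | S n => if Nat.even j then dyadic_open n (Nat.div2 j)
           else open_between (dyadic_open n (Nat.div2 j)) (dyadic_open n (S (Nat.div2 j)))
  end.

Lemma dyadic_open_even (n i : nat) : dyadic_open (S n) (2 * i) = dyadic_open n i.
Proof. cbn [dyadic_open]. rewrite Nat.even_even, Nat.div2_double. reflexivity. Qed.

Lemma dyadic_open_odd (n i : nat) :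
  dyadic_open (S n) (2 * i + 1) = open_between (dyadic_open n i) (dyadic_open n (S i)).
Proof. cbn [dyadic_open]. rewrite Nat.even_odd, Nat.add_1_r, Nat.div2_succ_double. reflexivity. Qed.

Lemma compact_closure_in_V1 (A : X -> Prop) : subset X A V1 -> compact X (closure X A).
Proof.
  intros HA. apply (compact_closed_subset X _ _ HV1c); [apply closure_closed|].
  apply closure_mono; auto.
Qed.

Lemma dyadic_open_spec (n : nat) :
  (forall j, (j <= 2 ^ n)%nat -> is_open X (dyadic_open n j) /\ subset X (dyadic_open n j) V1) /\
  (forall j, (j < 2 ^ n)%nat ->
     subset X (closure X (dyadic_open n j)) (dyadic_open n (S j))).
Proof.
  induction n as [|n [IHopen IHclosure]].
  - split.
    + intros [|[|j]] Hj; simpl in *; [|split; auto; intros x Hx; auto|lia].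
      split; auto. intros x Hx; apply HV01, subset_closure; auto.
    + intros j Hj. simpl in Hj. replace j with 0%nat by lia. auto.
  - assert (Hmid : forall i, (i < 2 ^ n)%nat ->
      let C := open_between (dyadic_open n i) (dyadic_open n (S i)) in
      is_open X C /\ subset X (closure X (dyadic_open n i)) C /\
      subset X (closure X C) (dyadic_open n (S i))).
    { intros i Hi. apply open_between_spec; [apply IHopen; lia| |auto].
      apply compact_closure_in_V1, IHopen; lia. }
    assert (P2n : (2 ^ S n = 2 * 2 ^ n)%nat) by (simpl; lia).
    split.
    + intros j Hj. destruct (Nat.Even_or_Odd j) as [[i ->]|[i ->]].
      * rewrite dyadic_open_even. apply IHopen. lia.
      * rewrite dyadic_open_odd. destruct (Hmid i) as [? [? Hcl]]; [lia|]. split; auto.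
        intros x Hx. apply (IHopen (S i)); [lia|]. apply Hcl, subset_closure; auto.
    + intros j Hj. destruct (Nat.Even_or_Odd j) as [[i ->]|[i ->]].
      * rewrite dyadic_open_even. replace (S (2 * i)) with (2 * i + 1)%nat by lia.
        rewrite dyadic_open_odd. apply Hmid. lia.
      * rewrite dyadic_open_odd. replace (S (2 * i + 1)) with (2 * S i)%nat by lia.
        rewrite dyadic_open_even. apply Hmid. lia.
Qed.

Lemma dyadic_open_refine (k n j : nat) : dyadic_open (k + n) (j * 2 ^ k) = dyadic_open n j.
Proof.
  induction k as [|k IH]; simpl; [rewrite Nat.mul_1_r; auto|].
  replace (j * (2 ^ k + (2 ^ k + 0)))%nat with (2 * (j * 2 ^ k))%nat by lia.
  rewrite <- IH. apply (dyadic_open_even (k + n)).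
Qed.

Lemma dyadic_open_closure_lt_index (n j j' : nat) : (j < j')%nat -> (j' <= 2 ^ n)%nat ->
  subset X (closure X (dyadic_open n j)) (dyadic_open n j').
Proof.
  intros Hjj' Hj'. induction Hjj' as [|j' Hjj' IH].
  - apply dyadic_open_spec; lia.
  - intros x Hx. apply (proj2 (dyadic_open_spec n) j'); [lia|].
    apply subset_closure, IH; auto. lia.
Qed.

Lemma dyadic_open_closure_lt (m i n j : nat) : (i <= 2 ^ m)%nat -> (j <= 2 ^ n)%nat ->
  INR i / 2 ^ m < INR j / 2 ^ n ->
  subset X (closure X (dyadic_open m i)) (dyadic_open n j).
Proof.
  intros Hi Hj Hlt.
  rewrite <- (dyadic_open_refine n m i), <- (dyadic_open_refine m n j), (Nat.add_comm m n).
  apply dyadic_open_closure_lt_index.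
  - pose proof (pow2_pos m). pose proof (pow2_pos n).
    rewrite Rdiv_lt_iff in Hlt by auto.
    replace (INR j / 2 ^ n * 2 ^ m) with (INR j * 2 ^ m / 2 ^ n) in Hlt by (field; lra).
    rewrite Rlt_div_iff in Hlt by auto.
    apply INR_lt. rewrite !mult_INR, !INR_pow2. exact Hlt.
  - rewrite Nat.pow_add_r. apply Nat.mul_le_mono_r. auto.
Qed.

Definition dyadic_levels (x : X) : R -> Prop :=
  fun r => r = 1 \/ exists n j, (j <= 2 ^ n)%nat /\ dyadic_open n j x /\ r = INR j / 2 ^ n.

Definition urysohn_level (x : X) : R := Rinf (dyadic_levels x).

Lemma dyadic_levels_nonneg (x : X) (r : R) : dyadic_levels x r -> 0 <= r.
Proof.
  intros [->|[n [j [_ [_ ->]]]]]; [lra|].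
  apply Rmult_le_pos; [apply pos_INR|left; apply Rinv_0_lt_compat, pow2_pos].
Qed.

Lemma urysohn_level_glb (x : X) : is_glb (dyadic_levels x) (urysohn_level x).
Proof. apply Rinf_is_glb; [exists 1; left; auto|exists 0; apply dyadic_levels_nonneg]. Qed.

Lemma urysohn_level_range (x : X) : 0 <= urysohn_level x <= 1.
Proof.
  destruct (urysohn_level_glb x) as [Hlow Hgreat]. split.
  - apply Hgreat, dyadic_levels_nonneg.
  - apply Hlow; left; auto.
Qed.

Lemma urysohn_level_V0 (x : X) : V0 x -> urysohn_level x = 0.
Proof.
  intros Hx. pose proof (urysohn_level_range x). destruct (urysohn_level_glb x) as [Hlow _].
  assert (urysohn_level x <= 0); [|lra].
  apply Hlow. right. exists 0%nat, 0%nat. simpl. repeat split; auto. lra.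
Qed.

Lemma urysohn_level_outside_V1 (x : X) : ~ V1 x -> urysohn_level x = 1.
Proof.
  intros Hx. pose proof (urysohn_level_range x). destruct (urysohn_level_glb x) as [_ Hgreat].
  assert (1 <= urysohn_level x); [|lra].
  apply Hgreat. intros y [->|[n [j [Hj [Hnj _]]]]]; [lra|].
  exfalso. apply Hx, (proj1 (dyadic_open_spec n) j Hj); auto.
Qed.

Lemma urysohn_level_open_lt (r : R) : is_open X (fun x => urysohn_level x < r).
Proof.
  destruct (Rlt_dec 1 r) as [Hr|Hr].
  { apply (open_ext X (fun _ => True)); [|apply open_full].
    intros x; pose proof (urysohn_level_range x); split; auto; lra. }
  apply (open_family_union X (fun U => exists n j,
           (j <= 2 ^ n)%nat /\ INR j / 2 ^ n < r /\ U = dyadic_open n j)).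
  - intros U [n [j [Hj [_ ->]]]]. apply (proj1 (dyadic_open_spec n) j Hj).
  - intros x. destruct (urysohn_level_glb x) as [Hlow Hgreat]. split.
    + intros Hx. apply NNPP; intros Hno. assert (r <= urysohn_level x); [|lra].
      apply Hgreat. intros y [->|[n [j [Hj [Hnj ->]]]]]; [lra|].
      apply Rnot_lt_le; intros Hlt. apply Hno. exists (dyadic_open n j). split; auto.
      exists n, j; auto.
    + intros [U [[n [j [Hj [Hr' ->]]]] Hx]].
      assert (urysohn_level x <= INR j / 2 ^ n); [|lra].
      apply Hlow. right. exists n, j; auto.
Qed.

Lemma urysohn_level_open_gt (r : R) : is_open X (fun x => r < urysohn_level x).
Proof.
  destruct (Rlt_dec r 0) as [Hr|Hr].
  { apply (open_ext X (fun _ => True)); [|apply open_full].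
    intros x; pose proof (urysohn_level_range x); split; auto; lra. }
  apply (open_family_union X (fun U => exists n j, (j < 2 ^ n)%nat /\ r < INR j / 2 ^ n /\
           U = fun x => ~ closure X (dyadic_open n j) x)).
  - intros U [n [j [_ [_ ->]]]]. apply closure_closed.
  - intros x. destruct (urysohn_level_glb x) as [Hlow Hgreat]. split.
    + intros Hx. pose proof (urysohn_level_range x).
      destruct (dyadic_between r (urysohn_level x)) as [n [j [Hj [Hrj Hjx]]]]; try lra.
      exists (fun x => ~ closure X (dyadic_open n j) x). split; [exists n, j; split; auto|].
      intros Hcl. assert (urysohn_level x <= INR (S j) / 2 ^ n); [|lra].
      apply Hlow. right. exists n, (S j). repeat split; auto.
      apply (proj2 (dyadic_open_spec n) j); auto.
    + intros [U [[n [j [Hj [Hrj ->]]]] Hx]].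
      assert (INR j / 2 ^ n <= urysohn_level x); [|lra].
      apply Hgreat. intros y [->|[m [i [Hi [Hmi ->]]]]].
      * left. apply Rdiv_lt_iff; [apply pow2_pos|]. rewrite Rmult_1_l, <- INR_pow2.
        apply lt_INR; auto.
      * apply Rnot_lt_le. intros Hlt. apply Hx, subset_closure.
        apply (dyadic_open_closure_lt m i n j); auto; [lia|apply subset_closure; auto].
Qed.

Lemma urysohn_level_continuous : continuous X urysohn_level.
Proof.
  apply continuous_of_open_halflines; [apply urysohn_level_open_gt|apply urysohn_level_open_lt].
Qed.

End Urysohn.

Lemma urysohn (X : TopSpace) : hausdorff X -> locally_compact X ->
  forall K U, compact X K -> is_open X U -> subset X K U ->
  exists u, Cc X u /\ (forall x, 0 <= u x <= 1) /\ (forall x, K x -> u x = 1) /\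
    subset X (support X u) U.
Proof.
  intros HX HLC K U HK HU HKU.
  destruct (shrink_open_nbhd X HX HLC K U HK HU HKU) as [V1 [HV1 [HKV1 [HV1c HV1U]]]].
  destruct (shrink_open_nbhd X HX HLC K V1 HK HV1 HKV1) as [V0 [HV0 [HKV0 [_ HV01]]]].
  set (g := urysohn_level X V0 V1).
  assert (Hsupp : subset X (support X (fun x => 1 - g x)) (closure X V1)).
  { apply closure_mono. intros x Hx. apply NNPP; intros Hn. apply Hx.
    unfold g; rewrite urysohn_level_outside_V1; auto. lra. }
  exists (fun x => 1 - g x). split; [split|split; [|split]].
  - apply continuous_comp; [reg|]. apply urysohn_level_continuous; auto.
  - apply (compact_closed_subset X _ _ HV1c); auto. apply closure_closed.
  - intros x. pose proof (urysohn_level_range X V0 V1 x). unfold g. lra.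
  - intros x Kx. unfold g. rewrite urysohn_level_V0; auto. lra.
  - intros x Hx. apply HV1U, Hsupp; auto.
Qed.

Definition Rpos (s : R) : R := (s + Rabs s) / 2.

Lemma continuity_Rpos : continuity Rpos.
Proof. unfold Rpos; reg. Qed.

Lemma Rpos_ge0 (s : R) : 0 <= Rpos s.
Proof. unfold Rpos, Rabs; destruct Rcase_abs; lra. Qed.

Lemma Rpos_id (s : R) : 0 <= s -> Rpos s = s.
Proof. unfold Rpos, Rabs; destruct Rcase_abs; lra. Qed.

Lemma Rpos_eq0 (s : R) : s <= 0 -> Rpos s = 0.
Proof. unfold Rpos, Rabs; destruct Rcase_abs; lra. Qed.

Lemma Rpos_ge (s : R) : s <= Rpos s.
Proof. unfold Rpos, Rabs; destruct Rcase_abs; lra. Qed.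

Lemma Rpos_le (s c : R) : s <= c -> 0 <= c -> Rpos s <= c.
Proof. unfold Rpos, Rabs; destruct Rcase_abs; lra. Qed.

Lemma Rpos_shift_dist (s t : R) : 0 <= t -> Rabs (Rpos s - Rpos (s - t)) <= t.
Proof.
  intros Ht. unfold Rpos. destruct (Rcase_abs s), (Rcase_abs (s - t));
    rewrite ?(Rabs_left s), ?(Rabs_right s), ?(Rabs_left (s - t)), ?(Rabs_right (s - t)) by lra;
    apply Rabs_le; lra.
Qed.

Section Indicator.
Variable X : TopSpace.

Lemma indicator_in (A : X -> Prop) (x : X) : A x -> indicator X A x = 1.
Proof. unfold indicator; destruct excluded_middle_informative; tauto. Qed.

Lemma indicator_out (A : X -> Prop) (x : X) : ~ A x -> indicator X A x = 0.
Proof. unfold indicator; destruct excluded_middle_informative; tauto. Qed.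

Lemma indicator_range (A : X -> Prop) (x : X) : 0 <= indicator X A x <= 1.
Proof. unfold indicator; destruct excluded_middle_informative; lra. Qed.

Lemma indicator_mono (A B : X -> Prop) (x : X) :
  subset X A B -> indicator X A x <= indicator X B x.
Proof.
  intros HAB. destruct (classic (A x)) as [Ax|Ax].
  - rewrite !indicator_in; auto; lra.
  - rewrite indicator_out; auto. apply indicator_range.
Qed.

Lemma nonneg_of_indicator_le (A : X -> Prop) (f : X -> R) (x : X) :
  (forall x, indicator X A x <= f x) -> 0 <= f x.
Proof. intros H. pose proof (indicator_range A x). specialize (H x). lra. Qed.

Lemma indicator_union_le (A B : X -> Prop) (x : X) :
  indicator X (fun x => A x \/ B x) x <= indicator X A x + indicator X B x.
Proof.
  pose proof (indicator_range (fun x => A x \/ B x) x).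
  pose proof (indicator_range A x); pose proof (indicator_range B x).
  destruct (classic (A x)) as [Ax|Ax]; [rewrite (indicator_in A x Ax); lra|].
  destruct (classic (B x)) as [Bx|Bx]; [rewrite (indicator_in B x Bx); lra|].
  rewrite !indicator_out by tauto. lra.
Qed.

Lemma indicator_le_Rmin (K : X -> Prop) (h u : X -> R) (x : X) :
  (forall x, indicator X K x <= h x) -> 0 <= u x -> (K x -> u x = 1) ->
  indicator X K x <= Rmin (h x) (u x).
Proof.
  intros HKh Hu HuK. specialize (HKh x). destruct (classic (K x)) as [Kx|Kx].
  - rewrite indicator_in in * by auto. rewrite HuK by auto. apply Rmin_glb; lra.
  - rewrite indicator_out in * by auto. apply Rmin_glb; lra.
Qed.

Lemma Rpos_le_indicator (A : X -> Prop) (f : X -> R) (x : X) :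
  (forall x, f x <= indicator X A x) ->
  Rpos (f x) <= indicator X A x /\ (~ A x -> Rpos (f x) = 0).
Proof.
  intros HfA. specialize (HfA x). split.
  - apply Rpos_le; auto. apply indicator_range.
  - intros Ax. rewrite indicator_out in HfA by auto. apply Rpos_eq0; auto.
Qed.

End Indicator.

Ltac case_indicator A x :=
  let H := fresh "Hin" in
  destruct (classic (A x)) as [H|H];
  [rewrite (indicator_in _ A x H)|rewrite (indicator_out _ A x H)].

Section QuasiIntegral.
Variable X : TopSpace.
Variable zeta : (X -> R) -> R.
Hypothesis HQ : quasi_integral X zeta.

Lemma zeta_mono (f g : X -> R) : Cc X f -> Cc X g -> (forall x, f x <= g x) -> zeta f <= zeta g.
Proof. apply (proj1 HQ). Qed.

Lemma zeta_ext (f g : X -> R) : (forall x, f x = g x) -> zeta f = zeta g.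
Proof. intros H. f_equal. apply functional_extensionality; auto. Qed.

Lemma zeta_comp_add (f : X -> R) (phi psi : R -> R) :
  Cc X f -> continuity phi -> phi 0 = 0 -> continuity psi -> psi 0 = 0 ->
  zeta (fun x => phi (f x) + psi (f x)) = zeta (fun x => phi (f x)) + zeta (fun x => psi (f x)).
Proof.
  intros. rewrite (zeta_ext _ (fun x => 1 * phi (f x) + 1 * psi (f x))) by (intros; lra).
  rewrite (proj2 (proj2 HQ)); auto. lra.
Qed.

Lemma zeta_scale (f : X -> R) (a : R) : Cc X f -> zeta (fun x => a * f x) = a * zeta f.
Proof.
  intros Hf. assert (Hid : continuity (fun s : R => s)) by reg.
  pose proof (proj2 (proj2 HQ) f Hf (fun s => s) (fun s => s) a 0 Hid eq_refl Hid eq_refl) as E.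
  rewrite (zeta_ext _ (fun x => a * f x + 0 * f x)) by (intros; lra).
  rewrite E. change (fun x => f x) with f. lra.
Qed.

Lemma zeta_zero : zeta (fun _ => 0) = 0.
Proof.
  rewrite (zeta_ext _ (fun x => 0 * (fun _ : X => 0) x)) by (intros; lra).
  rewrite zeta_scale; [lra|apply Cc_zero].
Qed.

Lemma zeta_nonneg (f : X -> R) : Cc X f -> (forall x, 0 <= f x) -> 0 <= zeta f.
Proof. intros Hf H. rewrite <- zeta_zero. apply zeta_mono; auto. apply Cc_zero. Qed.

(* [p1 = Rpos h] and [p2 = Rpos (- h)] for [h = p1 - p2]: both are functions of [h]. *)
Lemma zeta_add_disjoint (p1 p2 : X -> R) : Cc X p1 -> Cc X p2 ->
  (forall x, 0 <= p1 x) -> (forall x, 0 <= p2 x) -> (forall x, p1 x = 0 \/ p2 x = 0) ->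
  zeta (fun x => p1 x + p2 x) = zeta p1 + zeta p2.
Proof.
  intros Hp1 Hp2 P1 P2 D.
  set (h := fun x => p1 x - p2 x).
  assert (Hh : Cc X h).
  { apply (Cc_of_zeros X p1 p2); auto.
    - apply continuous_plus; [apply Hp1|]. apply continuous_comp; [reg|apply Hp2].
    - intros x E1 E2; unfold h; rewrite E1, E2; lra. }
  assert (E : forall x, Rpos (h x) = p1 x /\ Rpos (- h x) = p2 x).
  { intros x; unfold h; specialize (P1 x); specialize (P2 x).
    destruct (D x) as [E|E]; rewrite E; split;
      first [rewrite Rpos_id by lra; lra|rewrite Rpos_eq0 by lra; lra]. }
  rewrite (zeta_ext _ (fun x => Rpos (h x) + (fun s => Rpos (- s)) (h x)))
    by (intros x; destruct (E x) as [-> ->]; auto).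
  rewrite (zeta_comp_add h Rpos (fun s => Rpos (- s))); auto.
  - f_equal; apply zeta_ext; intros x; destruct (E x); auto.
  - apply continuity_Rpos.
  - apply Rpos_eq0; lra.
  - apply (continuity_comp (fun s => - s) Rpos); [reg|apply continuity_Rpos].
  - apply Rpos_eq0; lra.
Qed.

(* [g] and [w - g] are functions of [w + g], which lies in [0, 1] where [g = 0] and equals
   [1 + g] elsewhere. *)
Lemma zeta_add_on_plateau (w g : X -> R) : Cc X w -> Cc X g ->
  (forall x, 0 <= w x <= 1) -> (forall x, 0 <= g x <= 1) -> (forall x, g x <> 0 -> w x = 1) ->
  zeta w = zeta g + zeta (fun x => w x - g x).
Proof.
  intros Hw Hg Wr Gr Hplateau.
  set (F := fun x => w x + g x).
  set (phi := fun s => Rpos (s - 1)). set (psi := fun s => s - 2 * Rpos (s - 1)).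
  assert (E : forall x, phi (F x) = g x /\ psi (F x) = w x - g x).
  { intros x. unfold phi, psi, F. specialize (Wr x); specialize (Gr x).
    destruct (Req_dec (g x) 0) as [Z|Z].
    - rewrite Z, Rpos_eq0; lra.
    - rewrite (Hplateau x Z), Rpos_id; lra. }
  rewrite (zeta_ext w (fun x => phi (F x) + psi (F x)))
    by (intros x; destruct (E x) as [-> ->]; lra).
  rewrite (zeta_comp_add F phi psi).
  - f_equal; apply zeta_ext; intros x; destruct (E x); auto.
  - apply Cc_plus; auto.
  - unfold phi, Rpos; reg.
  - apply Rpos_eq0; lra.
  - unfold psi, Rpos; reg.
  - unfold psi; rewrite Rpos_eq0; lra.
Qed.

End QuasiIntegral.

Section TopologicalMeasure.
Variable X : TopSpace.
Variable zeta : (X -> R) -> R.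
Hypothesis HX : hausdorff X.
Hypothesis HLC : locally_compact X.
Hypothesis HQ : quasi_integral X zeta.

Local Notation tau := (tau_of X zeta).

Definition above_values (A : X -> Prop) : R -> Prop :=
  fun r => exists f, Cc X f /\ (forall x, indicator X A x <= f x) /\ r = zeta f.

Definition below_values (A : X -> Prop) : R -> Prop :=
  fun r => exists f, Cc X f /\ (forall x, f x <= indicator X A x) /\ r = zeta f.

Lemma tau_compact_eq (K : X -> Prop) : compact X K -> tau K = Rinf (above_values K).
Proof. intros HK. unfold tau_of. destruct excluded_middle_informative; [reflexivity|contradiction]. Qed.

Lemma tau_not_compact_eq (A : X -> Prop) : ~ compact X A -> tau A = Rsup (below_values A).
Proof. intros HA. unfold tau_of. destruct excluded_middle_informative; [contradiction|reflexivity]. Qed.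

Lemma tau_ext (A B : X -> Prop) : (forall x, A x <-> B x) -> tau A = tau B.
Proof. intros H. rewrite (pred_ext X A B H). reflexivity. Qed.

Lemma urysohn_indicator (K O : X -> Prop) : compact X K -> is_open X O -> subset X K O ->
  exists u, Cc X u /\ (forall x, 0 <= u x <= 1) /\ (forall x, indicator X K x <= u x) /\
    (forall x, u x <= indicator X O x) /\ (forall x, ~ O x -> u x = 0).
Proof.
  intros HK HO HKO.
  destruct (urysohn X HX HLC K O HK HO HKO) as [u [Hu [Hur [HuK Hsupp]]]].
  assert (Hu0 : forall x, ~ O x -> u x = 0).
  { intros x Ox. apply NNPP; intros Hn. apply Ox, Hsupp, subset_closure; auto. }
  exists u; split; [|split; [|split; [|split]]]; auto.
  - intros x; case_indicator K x; [rewrite HuK; auto; lra|apply Hur].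
  - intros x; case_indicator O x; [apply Hur|rewrite Hu0; auto; lra].
Qed.

Lemma above_values_glb (K : X -> Prop) : compact X K -> is_glb (above_values K) (Rinf (above_values K)).
Proof.
  intros HK. apply Rinf_is_glb.
  - destruct (urysohn_indicator K (fun _ => True) HK (open_full X)) as [u [Hu [_ [HuK _]]]];
      [intros x _; auto|].
    exists (zeta u), u; auto.
  - exists 0. intros y [f [Hf [HKf ->]]].
    apply zeta_nonneg; auto. intros x; apply (nonneg_of_indicator_le X K); auto.
Qed.

Lemma tau_compact_le (K : X -> Prop) (f : X -> R) :
  compact X K -> Cc X f -> (forall x, indicator X K x <= f x) -> tau K <= zeta f.
Proof. intros HK Hf HKf. rewrite tau_compact_eq; auto. apply (above_values_glb K HK). exists f; auto. Qed.

Lemma tau_compact_ge (K : X -> Prop) (b : R) : compact X K ->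
  (forall f, Cc X f -> (forall x, indicator X K x <= f x) -> b <= zeta f) -> b <= tau K.
Proof.
  intros HK H. rewrite tau_compact_eq; auto. apply (above_values_glb K HK).
  intros y [f [Hf [HKf ->]]]. auto.
Qed.

Lemma below_values_lub (O : X -> Prop) : in_O X O -> is_lub (below_values O) (Rsup (below_values O)).
Proof.
  intros [HO HOc]. apply Rsup_is_lub.
  - exists (zeta (fun _ => 0)), (fun _ => 0); split; [apply Cc_zero|split; auto].
    intros x; apply indicator_range.
  - destruct (urysohn_indicator (closure X O) (fun _ => True) HOc (open_full X))
      as [u [Hu [_ [HuO _]]]]; [intros x _; auto|].
    exists (zeta u). intros y [f [Hf [HfO ->]]]. apply zeta_mono; auto.
    intros x. specialize (HfO x). specialize (HuO x).
    pose proof (indicator_mono X O (closure X O) x (subset_closure X O)). lra.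
Qed.

(* A compact open set [O] falls under the infimum clause of [tau_of]; since [indicator X O]
   is then itself in [Cc X], the supremum clause would give the same value. *)
Lemma Cc_indicator_compact_open (O : X -> Prop) : is_open X O -> compact X O ->
  exists u, Cc X u /\ forall x, u x = indicator X O x.
Proof.
  intros HO HOc. destruct (urysohn_indicator O O HOc HO) as [u [Hu [_ [H1 [H2 _]]]]];
    [intros x; auto|].
  exists u; split; auto. intros x. specialize (H1 x); specialize (H2 x). lra.
Qed.

Lemma tau_open_ge (O : X -> Prop) (f : X -> R) :
  in_O X O -> Cc X f -> (forall x, f x <= indicator X O x) -> zeta f <= tau O.
Proof.
  intros HO Hf HfO. destruct (classic (compact X O)) as [Hc|Hc].
  - apply tau_compact_ge; auto. intros g Hg HOg. apply zeta_mono; auto.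
    intros x; specialize (HfO x); specialize (HOg x); lra.
  - rewrite tau_not_compact_eq; auto. apply (below_values_lub O HO). exists f; auto.
Qed.

Lemma tau_open_le (O : X -> Prop) (b : R) : in_O X O ->
  (forall f, Cc X f -> (forall x, f x <= indicator X O x) -> zeta f <= b) -> tau O <= b.
Proof.
  intros HO H. destruct (classic (compact X O)) as [Hc|Hc].
  - destruct (Cc_indicator_compact_open O (proj1 HO) Hc) as [u [Hu Eu]].
    apply Rle_trans with (zeta u).
    + apply tau_compact_le; auto. intros x; rewrite Eu; lra.
    + apply H; auto. intros x; rewrite Eu; lra.
  - rewrite tau_not_compact_eq; auto. apply (below_values_lub O HO).
    intros y [f [Hf [HfO ->]]]; auto.
Qed.

Lemma tau_nonneg (A : X -> Prop) : in_A X A -> 0 <= tau A.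
Proof.
  intros [HK|HO].
  - apply tau_compact_ge; auto. intros f Hf HKf. apply zeta_nonneg; auto.
    intros x; apply (nonneg_of_indicator_le X A); auto.
  - rewrite <- (zeta_zero X zeta HQ). apply tau_open_ge; [auto|apply Cc_zero|].
    intros; apply indicator_range.
Qed.

Lemma tau_mono_compact_open (K O : X -> Prop) :
  compact X K -> in_O X O -> subset X K O -> tau K <= tau O.
Proof.
  intros HK HO HKO. destruct (urysohn_indicator K O HK (proj1 HO) HKO) as [u [Hu [_ [HKu [HuO _]]]]].
  apply Rle_trans with (zeta u); [apply tau_compact_le|apply tau_open_ge]; auto.
Qed.

Lemma tau_mono (A B : X -> Prop) : in_A X A -> in_A X B -> subset X A B -> tau A <= tau B.
Proof.
  intros [HA|HA] [HB|HB] HAB.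
  - apply tau_compact_ge; auto. intros f Hf HBf. apply tau_compact_le; auto.
    intros x; pose proof (indicator_mono X A B x HAB); specialize (HBf x); lra.
  - apply tau_mono_compact_open; auto.
  - apply tau_open_le; auto. intros f Hf HfA. apply tau_compact_ge; auto.
    intros g Hg HBg. apply zeta_mono; auto.
    intros x; pose proof (indicator_mono X A B x HAB); specialize (HfA x); specialize (HBg x); lra.
  - apply tau_open_le; auto. intros f Hf HfA. apply tau_open_ge; auto.
    intros x; pose proof (indicator_mono X A B x HAB); specialize (HfA x); lra.
Qed.

Lemma superlevel_in_O (f : X -> R) (t : R) : Cc X f -> 0 < t -> in_O X (fun x => t < f x).
Proof.
  intros Hf Ht. split; [apply continuous_open_gt, Hf|].
  apply (compact_closed_subset X _ _ (proj2 Hf)); [apply closure_closed|].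
  apply closure_mono. intros x Hx; lra.
Qed.

Lemma superlevel_compact (f : X -> R) (t : R) : Cc X f -> 0 < t -> compact X (fun x => t <= f x).
Proof.
  intros Hf Ht. apply (compact_closed_subset X _ _ (proj2 Hf)).
  - apply (open_ext X (fun x => f x < t)); [intros x; lra|]. apply continuous_open_lt, Hf.
  - intros x Hx. apply subset_closure. lra.
Qed.

Lemma tau_superlevel_le (f : X -> R) (t : R) : Cc X f -> (forall x, 0 <= f x) -> 0 < t ->
  tau (fun x => t < f x) <= zeta f / t.
Proof.
  intros Hf Hf0 Ht. unfold Rdiv. rewrite Rmult_comm, <- zeta_scale; auto.
  apply tau_open_le; [apply superlevel_in_O; auto|]. intros g Hg Hgt. apply zeta_mono; auto.
  - apply (Cc_comp X (fun s => / t * s)); auto; [reg|lra].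
  - intros x. specialize (Hgt x). specialize (Hf0 x).
    assert (0 <= / t * f x) by (apply Rmult_le_pos; auto; left; apply Rinv_0_lt_compat; auto).
    revert Hgt; case_indicator (fun x => t < f x) x; intros Hgt; [|lra].
    apply Rle_trans with 1; auto.
    apply (Rmult_le_reg_l t); auto. rewrite <- Rmult_assoc, Rinv_r; lra.
Qed.

Lemma tau_compact_approx (K : X -> Prop) (eps : R) : compact X K -> 0 < eps ->
  exists O, in_O X O /\ subset X K O /\ tau O < tau K + eps.
Proof.
  intros HK Heps.
  assert (Hf : exists f, Cc X f /\ (forall x, indicator X K x <= f x) /\ zeta f < tau K + eps / 2).
  { apply NNPP; intros Hno. assert (tau K + eps / 2 <= tau K); [|lra].
    apply tau_compact_ge; auto. intros f Hf HKf.
    apply Rnot_lt_le; intros Hlt. apply Hno; exists f; auto. }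
  destruct Hf as [f [Hf [HKf Hzf]]].
  assert (Hf0 : forall x, 0 <= f x) by (intros x; apply (nonneg_of_indicator_le X K); auto).
  assert (Hz0 : 0 <= zeta f) by (apply zeta_nonneg; auto).
  pose proof (tau_nonneg K (or_introl HK)).
  (* [t < 1] is chosen so that [zeta f / t < tau K + eps]. *)
  set (t := (zeta f + eps / 2) / (tau K + eps)).
  assert (Ht : 0 < t < 1).
  { unfold t. split; [apply Rdiv_lt_0_compat; lra|]. rewrite Rdiv_lt_iff; lra. }
  exists (fun x => t < f x). split; [apply superlevel_in_O; auto; lra|split].
  - intros x Kx. specialize (HKf x). rewrite indicator_in in HKf; auto. lra.
  - apply (Rle_lt_trans _ (zeta f / t)); [apply tau_superlevel_le; auto; lra|].
    rewrite Rdiv_lt_iff by lra. unfold t. field_simplify; lra.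
Qed.

Lemma outer_regular (K : X -> Prop) : compact X K ->
  is_glb (fun r => exists O, in_O X O /\ subset X K O /\ r = tau O) (tau K).
Proof.
  intros HK. split.
  - intros y [O [HO [HKO ->]]]. apply tau_mono_compact_open; auto.
  - intros b Hb. apply Rle_plus_epsilon. intros eps Heps.
    destruct (tau_compact_approx K eps HK Heps) as [O [HO [HKO HOeps]]].
    assert (b <= tau O) by (apply Hb; exists O; auto). lra.
Qed.

(* The Lipschitz bound (ii) on [supp f] compares [zeta (Rpos o f)] with [zeta (Rpos o (f - t))],
   and the latter function is dominated by the indicator of the compact set [t <= f]. *)
Lemma zeta_le_of_compacts (A : X -> Prop) (f : X -> R) (b : R) :
  Cc X f -> (forall x, f x <= indicator X A x) ->
  (forall E, compact X E -> subset X E A -> tau E <= b) -> zeta f <= b.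
Proof.
  intros Hf HfA Hb.
  destruct (proj1 (proj2 HQ) (support X f) (proj2 Hf)) as [N [HN HLip]].
  set (fp := fun x => Rpos (f x)).
  assert (Hfp : Cc X fp) by (apply Cc_comp; [apply continuity_Rpos|apply Rpos_eq0; lra|auto]).
  apply Rle_trans with (zeta fp); [apply zeta_mono; auto; intros x; apply Rpos_ge|].
  apply Rle_plus_epsilon. intros eps Heps.
  set (t := eps / (N + 1)).
  assert (Ht : 0 < t) by (apply Rdiv_lt_0_compat; lra).
  set (ft := fun x => Rpos (f x - t)).
  assert (Hft : Cc X ft)
    by (apply (Cc_comp X (fun s => Rpos (s - t))); auto; [unfold Rpos; reg|apply Rpos_eq0; lra]).
  set (E := fun x => t <= f x).
  assert (HEA : subset X E A).
  { intros x Ex. apply NNPP; intros Ax. specialize (HfA x).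
    rewrite indicator_out in HfA; auto. unfold E in Ex. lra. }
  assert (Hft_le : zeta ft <= tau E).
  { apply tau_compact_ge; [apply superlevel_compact; auto|]. intros g Hg HEg. apply zeta_mono; auto.
    intros x. specialize (HEg x). specialize (HfA x). pose proof (indicator_range X A x).
    unfold ft. revert HEg; case_indicator E x; intros HEg.
    - apply Rpos_le; lra.
    - unfold E in Hin. rewrite Rpos_eq0; lra. }
  assert (Hdist : Rabs (zeta fp - zeta ft) <= N * t).
  { apply HLip; auto.
    - apply support_subset. intros x Hx; unfold fp; rewrite Hx; apply Rpos_eq0; lra.
    - apply support_subset. intros x Hx; unfold ft; rewrite Hx; apply Rpos_eq0; lra.
    - split; [lra|]. intros x. apply Rpos_shift_dist; lra. }
  assert (N * t <= eps).
  { unfold t. apply (Rmult_le_reg_r (N + 1)); [lra|].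
    replace (N * (eps / (N + 1)) * (N + 1)) with (N * eps) by (field; lra). nra. }
  pose proof (Rle_abs (zeta fp - zeta ft)).
  pose proof (Hb E (superlevel_compact f t Hf Ht) HEA). lra.
Qed.

Lemma tau_open_le_of_compacts (O : X -> Prop) (b : R) : in_O X O ->
  (forall E, compact X E -> subset X E O -> tau E <= b) -> tau O <= b.
Proof. intros HO Hb. apply tau_open_le; auto. intros f Hf HfO. apply (zeta_le_of_compacts O); auto. Qed.

Lemma inner_regular (O : X -> Prop) : in_O X O ->
  is_lub (fun r => exists K, in_K X K /\ subset X K O /\ r = tau K) (tau O).
Proof.
  intros HO. split.
  - intros y [K [HK [HKO ->]]]. apply tau_mono_compact_open; auto.
  - intros b Hb. apply tau_open_le_of_compacts; auto. intros E HE HEO. apply Hb. exists E; auto.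
Qed.

Lemma separating_functions (K1 K2 : X -> Prop) :
  compact X K1 -> compact X K2 -> (forall x, ~ (K1 x /\ K2 x)) ->
  exists u1 u2, Cc X u1 /\ Cc X u2 /\ (forall x, 0 <= u1 x <= 1) /\ (forall x, 0 <= u2 x <= 1) /\
    (forall x, K1 x -> u1 x = 1) /\ (forall x, K2 x -> u2 x = 1) /\
    (forall x, u1 x = 0 \/ u2 x = 0).
Proof.
  intros HK1 HK2 Hd.
  destruct (urysohn_indicator K1 (fun x => ~ K2 x) HK1 (compact_closed X HX K2 HK2))
    as [u [Hu [Hur [HK1u [_ Hu0]]]]]; [intros x K1x K2x; apply (Hd x); auto|].
  destruct (urysohn X HX HLC K2 (fun _ => True) HK2 (open_full X) (fun x _ => I))
    as [v [Hv [Hvr [HK2v _]]]].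
  (* Cut [u] at level 1/2: [u1] lives where [u > 1/2], [u2] where [u < 1/2]. *)
  exists (fun x => Rpos (2 * u x - 1)), (fun x => Rmin (v x) (Rpos (1 - 2 * u x))).
  split; [|split; [|split; [|split; [|split; [|split]]]]].
  - apply (Cc_comp X (fun s => Rpos (2 * s - 1))); auto; [unfold Rpos; reg|apply Rpos_eq0; lra].
  - apply (Cc_of_zeros X v v); auto.
    + apply continuous_min; [apply Hv|].
      apply (continuous_comp X (fun s => Rpos (1 - 2 * s))); [unfold Rpos; reg|apply Hu].
    + intros x Hx _. rewrite Hx. apply Rmin_left, Rpos_ge0.
  - intros x. specialize (Hur x). split; [apply Rpos_ge0|apply Rpos_le; lra].
  - intros x. specialize (Hur x); specialize (Hvr x). split.
    + apply Rmin_glb; [lra|apply Rpos_ge0].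
    + apply Rle_trans with (v x); [apply Rmin_l|lra].
  - intros x K1x. specialize (HK1u x). rewrite indicator_in in HK1u; auto.
    specialize (Hur x). rewrite Rpos_id; lra.
  - intros x K2x. rewrite HK2v, Hu0 by tauto. rewrite Rpos_id by lra. apply Rmin_left; lra.
  - intros x. destruct (Rle_dec (u x) (1 / 2)).
    + left. apply Rpos_eq0; lra.
    + right. rewrite (Rpos_eq0 (1 - 2 * u x)) by lra. apply Rmin_right; apply Hvr.
Qed.

Section DisjointCompacts.
Variables K1 K2 : X -> Prop.
Hypothesis HK1 : compact X K1.
Hypothesis HK2 : compact X K2.
Variables u1 u2 : X -> R.
Hypothesis Hu1 : Cc X u1.
Hypothesis Hu2 : Cc X u2.
Hypothesis Hu1r : forall x, 0 <= u1 x <= 1.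
Hypothesis Hu2r : forall x, 0 <= u2 x <= 1.
Hypothesis Hu1K : forall x, K1 x -> u1 x = 1.
Hypothesis Hu2K : forall x, K2 x -> u2 x = 1.
Hypothesis Hu12 : forall x, u1 x = 0 \/ u2 x = 0.

Lemma zeta_add_cutoffs (h1 h2 : X -> R) : Cc X h1 -> Cc X h2 ->
  (forall x, 0 <= h1 x) -> (forall x, 0 <= h2 x) ->
  zeta (fun x => Rmin (h1 x) (u1 x) + Rmin (h2 x) (u2 x)) =
  zeta (fun x => Rmin (h1 x) (u1 x)) + zeta (fun x => Rmin (h2 x) (u2 x)).
Proof.
  intros Hh1 Hh2 H1 H2. apply zeta_add_disjoint; try apply Cc_min; auto.
  - intros x; apply Rmin_glb; [apply H1|apply Hu1r].
  - intros x; apply Rmin_glb; [apply H2|apply Hu2r].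
  - intros x. destruct (Hu12 x) as [Z|Z]; [left|right]; rewrite Z; apply Rmin_right; auto.
Qed.

Lemma tau_union_compact_le : tau (fun x => K1 x \/ K2 x) <= tau K1 + tau K2.
Proof.
  assert (Hsum : forall f1 f2, Cc X f1 -> Cc X f2 ->
    (forall x, indicator X K1 x <= f1 x) -> (forall x, indicator X K2 x <= f2 x) ->
    tau (fun x => K1 x \/ K2 x) <= zeta f1 + zeta f2).
  { intros f1 f2 Hf1 Hf2 HK1f HK2f.
    assert (N1 : forall x, 0 <= f1 x) by (intros x; apply (nonneg_of_indicator_le X K1); auto).
    assert (N2 : forall x, 0 <= f2 x) by (intros x; apply (nonneg_of_indicator_le X K2); auto).
    apply Rle_trans with (zeta (fun x => Rmin (f1 x) (u1 x) + Rmin (f2 x) (u2 x))).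
    - apply tau_compact_le; [apply compact_union; auto|apply Cc_plus; apply Cc_min; auto|].
      intros x. pose proof (indicator_union_le X K1 K2 x).
      pose proof (indicator_le_Rmin X K1 f1 u1 x HK1f (proj1 (Hu1r x)) (Hu1K x)).
      pose proof (indicator_le_Rmin X K2 f2 u2 x HK2f (proj1 (Hu2r x)) (Hu2K x)). lra.
    - rewrite zeta_add_cutoffs; auto.
      apply Rplus_le_compat; apply zeta_mono; auto; try apply Cc_min; auto; intros; apply Rmin_l. }
  assert (H1 : forall f2, Cc X f2 -> (forall x, indicator X K2 x <= f2 x) ->
            tau (fun x => K1 x \/ K2 x) - zeta f2 <= tau K1).
  { intros f2 Hf2 HK2f. apply tau_compact_ge; auto. intros f1 Hf1 HK1f.
    pose proof (Hsum f1 f2 Hf1 Hf2 HK1f HK2f). lra. }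
  assert (tau (fun x => K1 x \/ K2 x) - tau K1 <= tau K2); [|lra].
  apply tau_compact_ge; auto. intros f2 Hf2 HK2f. pose proof (H1 f2 Hf2 HK2f). lra.
Qed.

Lemma tau_union_compact_ge : tau K1 + tau K2 <= tau (fun x => K1 x \/ K2 x).
Proof.
  apply tau_compact_ge; [apply compact_union; auto|]. intros g Hg HUg.
  assert (G0 : forall x, 0 <= g x) by (intros x; apply (nonneg_of_indicator_le X _ g x HUg)).
  assert (HKg : forall K, subset X K (fun x => K1 x \/ K2 x) -> forall x, indicator X K x <= g x).
  { intros K HK x. pose proof (indicator_mono X _ _ x HK). specialize (HUg x). lra. }
  assert (T1 : tau K1 <= zeta (fun x => Rmin (g x) (u1 x))).
  { apply tau_compact_le; [auto|apply Cc_min; auto|]. intros x.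
    apply indicator_le_Rmin; [apply HKg; intros y; auto|apply Hu1r|apply Hu1K]. }
  assert (T2 : tau K2 <= zeta (fun x => Rmin (g x) (u2 x))).
  { apply tau_compact_le; [auto|apply Cc_min; auto|]. intros x.
    apply indicator_le_Rmin; [apply HKg; intros y; auto|apply Hu2r|apply Hu2K]. }
  assert (zeta (fun x => Rmin (g x) (u1 x) + Rmin (g x) (u2 x)) <= zeta g).
  { apply zeta_mono; auto; [apply Cc_plus; apply Cc_min; auto|]. intros x.
    pose proof (Rmin_l (g x) (u1 x)); pose proof (Rmin_l (g x) (u2 x)).
    destruct (Hu12 x) as [Z|Z]; rewrite Z, (Rmin_right (g x) 0) by auto; lra. }
  rewrite zeta_add_cutoffs in H; auto. lra.
Qed.

End DisjointCompacts.

Lemma tau_union_compact (K1 K2 : X -> Prop) :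
  compact X K1 -> compact X K2 -> (forall x, ~ (K1 x /\ K2 x)) ->
  tau (fun x => K1 x \/ K2 x) = tau K1 + tau K2.
Proof.
  intros HK1 HK2 Hd.
  destruct (separating_functions K1 K2 HK1 HK2 Hd) as [u1 [u2 [? [? [? [? [? [? ?]]]]]]]].
  apply Rle_antisym; [apply (tau_union_compact_le K1 K2 HK1 HK2 u1 u2)|
                      apply (tau_union_compact_ge K1 K2 HK1 HK2 u1 u2)]; auto.
Qed.

Lemma in_O_diff_compact (W K : X -> Prop) : in_O X W -> compact X K -> in_O X (fun x => W x /\ ~ K x).
Proof.
  intros [HW HWc] HK. split.
  - apply open_inter; auto. apply compact_closed; auto.
  - apply (compact_closed_subset X _ _ HWc); [apply closure_closed|].
    apply closure_mono. intros x [? ?]; auto.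
Qed.

Lemma tau_union_open_le (O1 O2 : X -> Prop) : in_O X O1 -> in_O X O2 ->
  (forall x, ~ (O1 x /\ O2 x)) -> in_O X (fun x => O1 x \/ O2 x) ->
  tau (fun x => O1 x \/ O2 x) <= tau O1 + tau O2.
Proof.
  intros HO1 HO2 Hd HU. apply tau_open_le_of_compacts; auto. intros E HE HEU.
  set (E1 := fun x => E x /\ ~ O2 x). set (E2 := fun x => E x /\ ~ O1 x).
  assert (HE1 : compact X E1) by (apply compact_inter_closed, closed_complement, HO2; auto).
  assert (HE2 : compact X E2) by (apply compact_inter_closed, closed_complement, HO1; auto).
  rewrite (tau_ext E (fun x => E1 x \/ E2 x)), tau_union_compact; auto.
  - apply Rplus_le_compat; apply tau_mono_compact_open; auto;
      intros x [Ex Hx]; destruct (HEU x Ex); tauto.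
  - intros x [[Ex O2x] [_ O1x]]. destruct (HEU x Ex); tauto.
  - intros x; unfold E1, E2; split; [|tauto].
    intros Ex. destruct (HEU x Ex); [left|right]; split; auto; intros ?; apply (Hd x); auto.
Qed.

Lemma zeta_add_le_tau_union_open (O1 O2 : X -> Prop) (f1 f2 : X -> R) :
  in_O X (fun x => O1 x \/ O2 x) -> (forall x, ~ (O1 x /\ O2 x)) -> Cc X f1 -> Cc X f2 ->
  (forall x, f1 x <= indicator X O1 x) -> (forall x, f2 x <= indicator X O2 x) ->
  zeta f1 + zeta f2 <= tau (fun x => O1 x \/ O2 x).
Proof.
  intros HU Hd Hf1 Hf2 Hf1O Hf2O.
  assert (Hq1 : Cc X (fun x => Rpos (f1 x)))
    by (apply Cc_comp; auto; [apply continuity_Rpos|apply Rpos_eq0; lra]).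
  assert (Hq2 : Cc X (fun x => Rpos (f2 x)))
    by (apply Cc_comp; auto; [apply continuity_Rpos|apply Rpos_eq0; lra]).
  apply Rle_trans with (zeta (fun x => Rpos (f1 x) + Rpos (f2 x))).
  - rewrite zeta_add_disjoint; auto; try (intros; apply Rpos_ge0).
    + apply Rplus_le_compat; apply zeta_mono; auto; intros; apply Rpos_ge.
    + intros x. destruct (classic (O1 x)) as [O1x|O1x].
      * right. apply (proj2 (Rpos_le_indicator X O2 f2 x Hf2O)). intros O2x; apply (Hd x); auto.
      * left. apply (proj2 (Rpos_le_indicator X O1 f1 x Hf1O) O1x).
  - apply tau_open_ge; auto; [apply Cc_plus; auto|]. intros x.
    destruct (Rpos_le_indicator X O1 f1 x Hf1O) as [A1 B1].
    destruct (Rpos_le_indicator X O2 f2 x Hf2O) as [A2 B2].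
    case_indicator (fun x => O1 x \/ O2 x) x.
    + destruct (classic (O1 x)) as [O1x|O1x].
      * rewrite B2 by (intros O2x; apply (Hd x); auto).
        rewrite indicator_in in A1 by auto. lra.
      * rewrite B1 by auto. rewrite indicator_in in A2 by tauto. lra.
    + rewrite B1, B2 by tauto. lra.
Qed.

Lemma tau_union_open_ge (O1 O2 : X -> Prop) : in_O X O1 -> in_O X O2 ->
  (forall x, ~ (O1 x /\ O2 x)) -> in_O X (fun x => O1 x \/ O2 x) ->
  tau O1 + tau O2 <= tau (fun x => O1 x \/ O2 x).
Proof.
  intros HO1 HO2 Hd HU.
  assert (H1 : forall f2, Cc X f2 -> (forall x, f2 x <= indicator X O2 x) ->
            tau O1 <= tau (fun x => O1 x \/ O2 x) - zeta f2).
  { intros f2 Hf2 Hf2O. apply tau_open_le; auto. intros f1 Hf1 Hf1O.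
    pose proof (zeta_add_le_tau_union_open O1 O2 f1 f2 HU Hd Hf1 Hf2 Hf1O Hf2O). lra. }
  assert (tau O2 <= tau (fun x => O1 x \/ O2 x) - tau O1); [|lra].
  apply tau_open_le; auto. intros f2 Hf2 Hf2O. pose proof (H1 f2 Hf2 Hf2O). lra.
Qed.

(* Pick a Urysohn [v] for [K ⊂ W] and a Urysohn [w] equal to 1 on [C] and on [supp v]; for
   [g >= 1_K], [min g v] sits on the plateau of [w], and [w - min g v <= 1_(W \ K)]. *)
Lemma tau_compact_split_le (C K W : X -> Prop) : compact X C -> compact X K -> subset X K C ->
  in_O X W -> subset X C W -> tau C <= tau K + tau (fun x => W x /\ ~ K x).
Proof.
  intros HC HK HKC HW HCW.
  assert (HWK : in_O X (fun x => W x /\ ~ K x)) by (apply in_O_diff_compact; auto).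
  assert (tau C - tau (fun x => W x /\ ~ K x) <= tau K); [|lra].
  apply tau_compact_ge; auto. intros g Hg HKg.
  assert (G0 : forall x, 0 <= g x) by (intros x; apply (nonneg_of_indicator_le X _ g x HKg)).
  destruct (urysohn X HX HLC K W HK (proj1 HW) (fun x Kx => HCW x (HKC x Kx)))
    as [v [Hv [Hvr [HvK HvW]]]].
  set (S := fun x => C x \/ support X v x).
  assert (HS : compact X S) by (apply compact_union; auto; apply Hv).
  destruct (urysohn_indicator S W HS (proj1 HW)) as [w [Hw [Hwr [HSw [_ Hw0]]]]];
    [intros x [Cx|Hx]; auto|].
  set (m := fun x => Rmin (g x) (v x)).
  assert (Hm : Cc X m) by (apply Cc_min; auto).
  assert (Hmr : forall x, 0 <= m x <= v x).
  { intros x; unfold m; split; [apply Rmin_glb; [apply G0|apply Hvr]|apply Rmin_r]. }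
  assert (Hw1 : forall x, S x -> w x = 1).
  { intros x Sx. specialize (HSw x); specialize (Hwr x). rewrite indicator_in in HSw; auto. lra. }
  assert (HCw : tau C <= zeta w).
  { apply tau_compact_le; auto. intros x.
    pose proof (indicator_mono X C S x (fun y Cy => or_introl Cy)). specialize (HSw x). lra. }
  assert (Hmg : zeta m <= zeta g) by (apply zeta_mono; auto; intros; apply Rmin_l).
  assert (Hwm : zeta (fun x => w x - m x) <= tau (fun x => W x /\ ~ K x)).
  { apply tau_open_ge; auto.
    - apply Cc_plus; auto. apply (Cc_comp X (fun s => - s)); auto; [reg|lra].
    - intros x. specialize (Hmr x). specialize (Hwr x).
      case_indicator (fun x => W x /\ ~ K x) x; [lra|].
      destruct (classic (K x)) as [Kx|Kx].
      + rewrite Hw1 by (left; apply HKC; auto).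
        unfold m. rewrite HvK by auto.
        specialize (HKg x). rewrite indicator_in in HKg by auto. rewrite Rmin_right; lra.
      + rewrite Hw0 by tauto. lra. }
  rewrite (zeta_add_on_plateau X zeta HQ w m) in HCw; auto; [lra| |].
  - intros x. specialize (Hmr x); specialize (Hvr x). lra.
  - intros x Hx. apply Hw1. right. apply subset_closure. specialize (Hmr x). lra.
Qed.

Lemma tau_superadditive (K O U : X -> Prop) : compact X K -> in_O X O ->
  (forall x, ~ (K x /\ O x)) -> in_A X U -> subset X K U -> subset X O U ->
  tau K + tau O <= tau U.
Proof.
  intros HK HO Hd HU HKU HOU.
  assert (tau O <= tau U - tau K); [|lra].
  apply tau_open_le_of_compacts; auto. intros E HE HEO.
  assert (tau K + tau E <= tau U); [|lra].
  rewrite <- tau_union_compact; auto.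
  - apply tau_mono; auto; [left; apply compact_union; auto|]. intros x [Kx|Ex]; auto.
  - intros x [Kx Ex]. apply (Hd x); auto.
Qed.

Lemma tau_union_KO_open (K O : X -> Prop) : compact X K -> in_O X O ->
  (forall x, ~ (K x /\ O x)) -> in_O X (fun x => K x \/ O x) ->
  tau (fun x => K x \/ O x) = tau K + tau O.
Proof.
  intros HK HO Hd HU. apply Rle_antisym.
  - apply tau_open_le_of_compacts; auto. intros E HE HEU.
    apply Rle_trans with (tau (fun x => K x \/ E x));
      [apply tau_mono; [left|left; apply compact_union|]; auto; intros x; auto|].
    apply Rle_trans with (tau K + tau (fun x => (K x \/ O x) /\ ~ K x)).
    + apply tau_compact_split_le; auto; [apply compact_union; auto|intros x; auto|].
      intros x [Kx|Ex]; auto.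
    + apply Rplus_le_compat_l, tau_mono; [right; apply in_O_diff_compact|right|]; auto.
      intros x [[Kx|Ox] NKx]; tauto.
  - apply tau_superadditive; auto; [right|intros x..]; auto.
Qed.

Lemma tau_open_diff_le (K O W : X -> Prop) : compact X K -> in_O X O ->
  (forall x, ~ (K x /\ O x)) -> compact X (fun x => K x \/ O x) -> in_O X W ->
  subset X (fun x => K x \/ O x) W ->
  tau (fun x => W x /\ ~ K x) <= tau O + tau (fun x => W x /\ ~ (K x \/ O x)).
Proof.
  intros HK HO Hd HC HW HCW.
  apply tau_open_le_of_compacts; [apply in_O_diff_compact; auto|]. intros E HE HEW.
  set (E1 := fun x => E x /\ (K x \/ O x)). set (E2 := fun x => E x /\ ~ O x).
  assert (HE1 : compact X E1) by (apply compact_inter_closed, compact_closed; auto).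
  assert (HE2 : compact X E2) by (apply compact_inter_closed, closed_complement, HO; auto).
  rewrite (tau_ext E (fun x => E1 x \/ E2 x)), tau_union_compact; auto.
  - apply Rplus_le_compat; apply tau_mono_compact_open; auto; try (apply in_O_diff_compact; auto);
      intros x [Ex Hx]; destruct (HEW x Ex); tauto.
  - intros x [[Ex [Kx|Ox]] [_ NOx]]; [destruct (HEW x Ex)|]; tauto.
  - intros x; unfold E1, E2; split; [|tauto].
    intros Ex. destruct (classic (O x)); [left|right]; tauto.
Qed.

(* With [W ⊃ K ∪ O] nearly optimal for [tau (K ∪ O)], split [tau (K ∪ O)] along
   [K], [O] and [W \ (K ∪ O)]; the last term is small. *)
Lemma tau_union_KO_compact (K O : X -> Prop) : compact X K -> in_O X O ->
  (forall x, ~ (K x /\ O x)) -> compact X (fun x => K x \/ O x) ->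
  tau (fun x => K x \/ O x) = tau K + tau O.
Proof.
  intros HK HO Hd HC. apply Rle_antisym.
  - apply Rle_plus_epsilon. intros eps Heps.
    destruct (tau_compact_approx _ eps HC Heps) as [W [HW [HCW HWeps]]].
    pose proof (tau_compact_split_le (fun x => K x \/ O x) K W HC HK (fun x Kx => or_introl Kx) HW HCW).
    pose proof (tau_open_diff_le K O W HK HO Hd HC HW HCW).
    assert (tau (fun x => K x \/ O x) + tau (fun x => W x /\ ~ (K x \/ O x)) <= tau W).
    { apply tau_superadditive; [auto|apply in_O_diff_compact; auto|tauto|right; auto|auto|].
      intros x [? ?]; auto. }
    lra.
  - apply tau_superadditive; auto; [left|intros x..]; auto.
Qed.

Lemma tau_union_KO (K O : X -> Prop) : compact X K -> in_O X O ->
  (forall x, ~ (K x /\ O x)) -> in_A X (fun x => K x \/ O x) ->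
  tau (fun x => K x \/ O x) = tau K + tau O.
Proof.
  intros HK HO Hd [HU|HU]; [apply tau_union_KO_compact|apply tau_union_KO_open]; auto.
Qed.

Lemma tau_additive (A B : X -> Prop) : in_A X A -> in_A X B -> (forall x, ~ (A x /\ B x)) ->
  in_A X (fun x => A x \/ B x) -> tau (fun x => A x \/ B x) = tau A + tau B.
Proof.
  intros HA HB Hd HU.
  destruct (classic (compact X A)) as [KA|KA]; destruct (classic (compact X B)) as [KB|KB].
  - apply tau_union_compact; auto.
  - destruct HB as [|HB]; [contradiction|]. apply tau_union_KO; auto.
  - destruct HA as [|HA]; [contradiction|].
    rewrite (pred_ext X (fun x => A x \/ B x) (fun x => B x \/ A x)) in * by tauto.
    rewrite tau_union_KO; auto; [lra|]. intros x [? ?]; apply (Hd x); auto.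
  - destruct HA as [|HA]; [contradiction|]. destruct HB as [|HB]; [contradiction|].
    destruct HU as [HU|HU]; [|apply Rle_antisym; [apply tau_union_open_le|apply tau_union_open_ge]; auto].
    exfalso. apply KA, (compact_ext X (fun x => (A x \/ B x) /\ ~ B x)).
    + intros x; split; [tauto|]. intros Ax; split; auto. intros Bx; apply (Hd x); auto.
    + apply compact_inter_closed, closed_complement, HB; auto.
Qed.

Lemma tau_topological_measure : topological_measure X tau.
Proof.
  split; [|split; [|split; [|split]]].
  - apply tau_nonneg.
  - apply tau_additive.
  - apply tau_mono.
  - apply outer_regular.
  - apply inner_regular.
Qed.

End TopologicalMeasure.

Theorem proposition2p4 (X : TopSpace) (zeta : (X -> R) -> R) :
  hausdorff X -> locally_compact X -> quasi_integral X zeta ->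
  topological_measure X (tau_of X zeta).
Proof. intros HX HLC HQ. exact (tau_topological_measure X zeta HX HLC HQ). Qed.
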